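(* Let $a,b,c,x,y\in X$ with $a\ge b$, $a\ne b$, $x\ge c$, $x\ne c$, $y\ge c$, $y\ne c$, and $x\ne y$. Then $\tau_{a,b}\,\tau_{[x,y],c}\,\tau_{a,b}^{-1}\in K_{\{a,b,c,x,y\}}$.
   Context: $\Gamma$ is a finite simplicial graph with vertex set $X$, $A_\Gamma$ its right-angled Artin group ($x,y\in X$ commute iff adjacent). $L=X\cup X^{-1}$; for $u\in L$, $\bar u\in X$ is the vertex with $u\in\{\bar u,\bar u^{-1}\}$. $\mathrm{lk}(v)$ is the set of neighbours of $v$, $\mathrm{st}(v)=\mathrm{lk}(v)\cup\{v\}$. Domination: $v\ge w$ iff $\mathrm{lk}(w)\subset\mathrm{st}(v)$; for letters, $u\ge u'$ iff $\bar u\ge\bar u'$. For $u,v\in L$ with $u\ge v$, $\bar u\ne\bar v$, the transvection $\tau_{u,v}$ sends $v\mapsto vu$ and fixes all generators other than $\bar v$. For $u\ge v$, $\bar u\ne\bar v$, $c_{u,\{v\}}$ sends $v\mapsto u^{-1}vu$ and fixes all other generators. For $x,y,c\in L$ with $x,y\ge c$ and $\bar x,\bar y,\bar c$ distinct, $\tau_{[x,y],c}$ sends $c\mapsto c[x,y]$ (with $[x,y]=xyx^{-1}y^{-1}$) and fixes all generators other than $\bar c$. For $Z\subset X$, $K_Z\le\mathrm{Aut}\,A_\Gamma$ is generated by all $\tau_{[x,y],c}$ and all $c_{x,\{c\}}$ with $x,y,c\in Z$ and $x,y\ge c$ (distinct where required), together with all inner automorphisms. *)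

(* Right-angled Artin groups via words modulo the RAAG congruence;
   automorphisms represented by the images of generators (substitutions),
   considered up to pointwise equality in A_Gamma. *)
From mathcomp Require Import all_boot.
Set Implicit Arguments. Unset Strict Implicit. Unset Printing Implicit Defensive.

Section RAAG.
Variable X : finType.
Variable adj : rel X.

(* a letter (v, false) is the generator v, (v, true) is v^{-1}; l.1 is \bar l *)
Definition letter := (X * bool)%type.
Definition word := seq letter.
Definition linv (l : letter) : letter := (l.1, ~~ l.2).
Definition winv (w : word) : word := rev (map linv w).

Inductive weq : word -> word -> Prop :=
| weq_refl w : weq w w
| weq_sym w1 w2 : weq w1 w2 -> weq w2 w1
| weq_trans w1 w2 w3 : weq w1 w2 -> weq w2 w3 -> weq w1 w3
| weq_cancel u l v : weq (u ++ l :: linv l :: v) (u ++ v)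
| weq_comm u l1 l2 v : adj l1.1 l2.1 -> weq (u ++ l1 :: l2 :: v) (u ++ l2 :: l1 :: v).

Definition endo := X -> word.
Definition subst (f : endo) (w : word) : word :=
  flatten (map (fun l : letter => if l.2 then winv (f l.1) else f l.1) w).
Definition eeq (f g : endo) : Prop := forall z, weq (f z) (g z).
Definition ecomp (f g : endo) : endo := fun z => subst f (g z).
Definition idE : endo := fun z => [:: (z, false)].
Definition is_inv (f g : endo) : Prop := eeq (ecomp f g) idE /\ eeq (ecomp g f) idE.

Inductive gen (S : endo -> Prop) : endo -> Prop :=
| gen_base f : S f -> gen S f
| gen_id : gen S idE
| gen_comp f g : gen S f -> gen S g -> gen S (ecomp f g)
| gen_inv f g : gen S f -> is_inv f g -> gen S g
| gen_eeq f g : gen S f -> eeq f g -> gen S g.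

Definition lk (v : X) : {set X} := [set z | adj v z].
Definition st (v : X) : {set X} := v |: lk v.
Definition dom (v w : X) : bool := lk w \subset st v.

Definition letter_map (v : letter) (w : word) : endo :=
  fun z => if z == v.1 then (if v.2 then winv w else w) else idE z.

Definition transv (u v : letter) : endo := letter_map v [:: v; u].
Definition pconj (u v : letter) : endo := letter_map v [:: linv u; v; u].
Definition ctransv (x y c : letter) : endo :=
  letter_map c [:: c; x; y; linv x; linv y].
Definition inner (g : word) : endo := fun z => winv g ++ (z, false) :: g.

Definition K_gens (Z : {set X}) (f : endo) : Prop :=
  (exists x y c : X, [/\ [&& x \in Z, y \in Z & c \in Z], dom x c && dom y c,
      [&& x != y, x != c & y != c] & f = ctransv (x, false) (y, false) (c, false)])
  \/ (exists x c : X, [/\ x \in Z, c \in Z, dom x c, x != c &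
      f = pconj (x, false) (c, false)])
  \/ (exists g : word, f = inner g).

Definition K (Z : {set X}) : endo -> Prop := gen (K_gens Z).

End RAAG.

From mathcomp Require Import all_boot.
Set Implicit Arguments. Unset Strict Implicit. Unset Printing Implicit Defensive.

(* The conjugate tau_{a,b} tau_{[x,y],c} tau_{a,b}^-1 only depends on how b and
   a sit relative to c, x, y.  In each of the nine configurations it is equal,
   already in the free group on X, to tau_{[x,y],c} itself or to an explicit
   short product of commutator transvections, partial conjugations and their
   inverses, all supported on {a, b, c, x, y}.  These factors are legitimate
   elements of K because domination is transitive (e.g. y >= c >= b gives
   y >= b).  Finally, since tau_{a,b} and tau_{[x,y],c} respect the relations
   of A_Gamma, the conjugate does not depend on which inverse of tau_{a,b} is
   used, so the explicit inverse b |-> b a^-1 may be substituted. *)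

Section RAAG.
Variable X : finType.
Variable adj : rel X.
Hypothesis adj_sym : symmetric adj.
Hypothesis adj_irr : irreflexive adj.

Local Notation weq := (weq adj).
Local Notation eeq := (eeq adj).
Local Notation K := (K adj).
Local Notation dom := (dom adj).

Lemma weq_ctx p u v q : weq u v -> weq (p ++ u ++ q) (p ++ v ++ q).
Proof.
elim=> {u v} [w|w1 w2 _ IH|w1 w2 w3 _ IH1 _ IH2|u l v|u l1 l2 v H].
- exact: weq_refl.
- exact: weq_sym.
- exact: weq_trans IH2.
- by have := weq_cancel adj (p ++ u) l (v ++ q); rewrite -!catA.
- by have := weq_comm (p ++ u) (v ++ q) H; rewrite -!catA.
Qed.

Lemma weq_cat u u' v v' : weq u v -> weq u' v' -> weq (u ++ u') (v ++ v').
Proof.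
move=> Huv Huv'; apply: weq_trans (_ : weq (v ++ u') _).
  by have := weq_ctx [::] u' Huv.
by have := weq_ctx v [::] Huv'; rewrite !cats0.
Qed.

Lemma weq_cons l u v : weq u v -> weq (l :: u) (l :: v).
Proof. exact: weq_cat (weq_refl adj [:: l]). Qed.

Lemma linvK : involutive (@linv X).
Proof. by case=> v e; rewrite /linv negbK. Qed.

Lemma winv_cat (u v : word X) : winv (u ++ v) = winv v ++ winv u.
Proof. by rewrite /winv map_cat rev_cat. Qed.

Lemma winv_cons (l : letter X) (w : word X) : winv (l :: w) = winv w ++ [:: linv l].
Proof. by rewrite -cat1s winv_cat. Qed.

Lemma winvK : involutive (@winv X).
Proof. by move=> w; rewrite /winv map_rev revK -map_comp (eq_map linvK) map_id. Qed.

Lemma weq_winv u v : weq u v -> weq (winv u) (winv v).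
Proof.
elim=> {u v} [w|w1 w2 _ IH|w1 w2 w3 _ IH1 _ IH2|u l v|u l1 l2 v H].
- exact: weq_refl.
- exact: weq_sym.
- exact: weq_trans IH2.
- rewrite !winv_cat !winv_cons -?catA /= linvK.
  by have := weq_cancel adj (winv v) l (winv u); rewrite -?catA.
- rewrite !winv_cat !winv_cons -?catA /=.
  by apply: weq_comm; rewrite adj_sym.
Qed.

Lemma weq_winv_r w : weq (w ++ winv w) [::].
Proof.
elim: w => [|l w IH] /=; first exact: weq_refl.
rewrite winv_cons catA -cat_cons.
apply: weq_trans (_ : weq ([:: l] ++ [::] ++ [:: linv l]) _).
  by have := weq_ctx [:: l] [:: linv l] IH; rewrite /= -catA.
exact: weq_cancel adj [::] l [::].
Qed.

Lemma weq_winv_l w : weq (winv w ++ w) [::].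
Proof. by have := weq_winv_r (winv w); rewrite winvK. Qed.

(* The sign test comes first so that [cancels] evaluates on symbolic vertices. *)
Definition cancels (l m : letter X) := (if l.2 then ~~ m.2 else m.2) && (l.1 == m.1).

Definition reduce_cons (l : letter X) (s : word X) :=
  if s is m :: s' then (if cancels l m then s' else l :: m :: s') else [:: l].

Fixpoint reduce (w : word X) : word X :=
  if w is l :: w' then reduce_cons l (reduce w') else [::].

Lemma weq_reduce w : weq w (reduce w).
Proof.
elim: w => [|l w IH] /=; first exact: weq_refl.
apply: weq_trans (weq_cons l IH) _.
case: (reduce w) => [|m s] /=; first exact: weq_refl.
case: ifP => [/andP[ne2 /eqP E12]|_]; last exact: weq_refl.
have -> : m = linv l by case: l m E12 ne2 => v [] [v' []] //= ->.
exact: weq_cancel adj [::] l s.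
Qed.

Lemma reduce_weq u v : reduce u = reduce v -> weq u v.
Proof. by move=> E; apply: weq_trans (weq_reduce u) _; rewrite E; apply/weq_sym/weq_reduce. Qed.

Lemma reduce_eeq (f g : endo X) : (forall z, reduce (f z) = reduce (g z)) -> eeq f g.
Proof. by move=> E z; apply: reduce_weq. Qed.

Definition comm_words (u v : word X) :=
  all (fun l : letter X => all (fun m : letter X => adj l.1 m.1 || (l.1 == m.1)) v) u.

Lemma comm_letters (l m : letter X) : adj l.1 m.1 || (l.1 == m.1) ->
  weq [:: l; m] [:: m; l].
Proof.
case/orP=> [Hlm|/eqP]; first exact: (weq_comm [::] [::] Hlm).
case: l m => v e [v' e'] /= ->.
have [->|ne] := eqVneq e e'; first exact: weq_refl.
have -> : e' = ~~ e by case: e e' ne => [] [].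
apply: weq_trans (_ : weq [::] _); first exact: weq_cancel adj [::] (v', e) [::].
apply/weq_sym; have := weq_cancel adj [::] (v', ~~ e) [::]; by rewrite /linv negbK.
Qed.

Lemma comm_letter_word (l : letter X) v :
  comm_words [:: l] v -> weq (l :: v) (v ++ [:: l]).
Proof.
rewrite /comm_words /= andbT.
elim: v => [|m v IH] /=; first by move=> _; exact: weq_refl.
case/andP=> Hlm Hlv; apply: weq_trans (_ : weq (m :: l :: v) _).
  by have := weq_ctx [::] v (comm_letters Hlm).
exact/weq_cons/IH.
Qed.

Lemma comm_words_weq u v : comm_words u v -> weq (u ++ v) (v ++ u).
Proof.
elim: u => [|l u IH] /=; first by move=> _; rewrite cats0; exact: weq_refl.
case/andP=> Hlv Huv; apply: weq_trans (_ : weq (l :: v ++ u) _).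
  exact/weq_cons/IH.
have := weq_ctx [::] u (@comm_letter_word l v _); rewrite /= -catA; apply.
by rewrite /comm_words /= Hlv.
Qed.

Lemma comm_wordsC u v : comm_words u v -> comm_words v u.
Proof.
move=> Huv; apply/allP => m mv; apply/allP => l lu.
by have := allP (allP Huv l lu) m mv; rewrite adj_sym eq_sym.
Qed.

Lemma comm_words_winvl u v : comm_words u v -> comm_words (winv u) v.
Proof. by rewrite /comm_words /winv all_rev all_map; apply: sub_all => -[]. Qed.

Lemma comm_words_winvr u v : comm_words u v -> comm_words u (winv v).
Proof. by move/comm_wordsC/comm_words_winvl/comm_wordsC. Qed.

Definition letter_img (f : endo X) (l : letter X) :=
  if l.2 then winv (f l.1) else f l.1.

Lemma subst_cons (f : endo X) l w : subst f (l :: w) = letter_img f l ++ subst f w.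
Proof. by []. Qed.

Lemma subst_cat (f : endo X) u v : subst f (u ++ v) = subst f u ++ subst f v.
Proof. by rewrite /subst map_cat flatten_cat. Qed.

Lemma subst_winv (f : endo X) w : subst f (winv w) = winv (subst f w).
Proof.
elim: w => [|l w IH] //.
rewrite winv_cons subst_cat IH subst_cons winv_cat; congr (_ ++ _).
by rewrite /subst /= cats0 /letter_img; case: l => v [] /=; rewrite ?winvK.
Qed.

Lemma subst_comp (f g : endo X) w : subst (ecomp f g) w = subst f (subst g w).
Proof.
elim: w => [|l w IH] //.
rewrite !subst_cons subst_cat IH; congr (_ ++ _).
by rewrite /letter_img /ecomp; case: l => v [] //=; rewrite subst_winv.
Qed.

Lemma subst_idE w : subst (@idE X) w = w.
Proof. by elim: w => [|[v []] w IH] //; rewrite subst_cons IH. Qed.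

Lemma subst_gen (f : endo X) z : subst f [:: (z, false)] = f z.
Proof. by rewrite /subst /= cats0. Qed.

Lemma subst_eeq (f g : endo X) w : eeq f g -> weq (subst f w) (subst g w).
Proof.
move=> Efg; elim: w => [|l w IH]; first exact: weq_refl.
rewrite !subst_cons; apply: weq_cat IH.
by rewrite /letter_img; case: l.2; [apply: weq_winv |].
Qed.

Definition respects_adj (f : endo X) := forall p q, adj p q -> comm_words (f p) (f q).

Lemma weq_subst (f : endo X) u v : respects_adj f -> weq u v -> weq (subst f u) (subst f v).
Proof.
move=> Hf; elim=> {u v} [w|w1 w2 _ IH|w1 w2 w3 _ IH1 _ IH2|u l v|u l1 l2 v H].
- exact: weq_refl.
- exact: weq_sym.
- exact: weq_trans IH2.
- rewrite !subst_cat !subst_cons.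
  have Hl : weq (letter_img f l ++ letter_img f (linv l)) [::].
    by rewrite /letter_img; case: l => v' [] /=; rewrite ?winvK;
      [exact: weq_winv_l | exact: weq_winv_r].
  by have := weq_ctx (subst f u) (subst f v) Hl; rewrite -!catA.
- rewrite !subst_cat !subst_cons.
  have Hl12 : weq (letter_img f l1 ++ letter_img f l2) (letter_img f l2 ++ letter_img f l1).
    apply: comm_words_weq; have := Hf _ _ H.
    rewrite /letter_img; case: l1 H => v1 [] /=; case: l2 => v2 [] /= _ C12.
    + exact/comm_words_winvl/comm_words_winvr.
    + exact: comm_words_winvl.
    + exact: comm_words_winvr.
    + exact: C12.
  by have := weq_ctx (subst f u) (subst f v) Hl12; rewrite -!catA.
Qed.

Lemma domP v w q : dom v w -> adj w q -> adj v q || (v == q).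
Proof.
move=> /subsetP /(_ q) Hq wq; move: Hq; rewrite /st !inE wq => /(_ isT).
by case/orP=> [/eqP ->|->]; rewrite ?eqxx ?orbT.
Qed.

Lemma dom_trans v u w : dom v u -> dom u w -> dom v w.
Proof.
move=> Hvu Huw; apply/subsetP => q; rewrite /st !inE => wq.
case/orP: (domP Huw wq) => [uq|/eqP Euq].
  by case/orP: (domP Hvu uq) => [->|/eqP ->]; rewrite ?eqxx ?orbT.
subst q; have wu : adj u w by rewrite adj_sym.
case/orP: (domP Hvu wu) => [vw|/eqP Evw]; last by subst w; rewrite wq orbT.
have wv : adj w v by rewrite adj_sym.
case/orP: (domP Huw wv) => [uv|/eqP ->]; last by rewrite eqxx.
by rewrite adj_sym uv orbT.
Qed.

Lemma respects_adj_letter_map v w :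
  (forall q, adj v q -> comm_words w [:: (q, false)]) ->
  respects_adj (letter_map (v, false) w).
Proof.
move=> Hw p q pq; rewrite /letter_map /=.
have [Ep | pv] := eqVneq p v; have [Eq | qv] := eqVneq q v; subst.
- by rewrite adj_irr in pq.
- exact: Hw.
- by apply/comm_wordsC/Hw; rewrite adj_sym.
- by rewrite /comm_words /= pq.
Qed.

Definition tau (a b : X) : endo X := transv (a, false) (b, false).
Definition tauV (a b : X) : endo X := letter_map (b, false) [:: (b, false); (a, true)].
Definition tauC (x y c : X) : endo X := ctransv (x, false) (y, false) (c, false).
Definition pc (u v : X) : endo X := pconj (u, false) (v, false).
Definition pcV (u v : X) : endo X :=
  letter_map (v, false) [:: (u, false); (v, false); (u, true)].

Definition conjT (a b x y c : X) : endo X := ecomp (tau a b) (ecomp (tauC x y c) (tauV a b)).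

Definition eprod (fs : seq (endo X)) : endo X := foldr (@ecomp X) (@idE X) fs.

(* Decides an identity between letter maps, generator by generator, by computing
   free normal forms; the disequalities in the context settle the tests
   [z == v] hidden in [letter_map]. *)
Ltac neq_to_eqF := repeat match goal with H : is_true (?p != ?q) |- _ =>
  have ? := negbTE H; (have ? : (q == p) = false by rewrite eq_sym (negbTE H));
  clear H end.
Ltac eval_words := match goal with |- ?G =>
  cbv [ecomp eprod subst letter_map idE flatten foldr map cat winv rev catrev linv
       fst snd negb andb transv ctransv pconj tau tauV tauC pc pcV conjT
       reduce reduce_cons cancels];
  rewrite ?eqxx;
  repeat match goal with E : (_ == _) = false |- _ => progress rewrite E end;
  match goal with |- ?G' => tryif constr_eq G G' then idtac else eval_words end end.
Ltac free_identity b c :=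
  apply: reduce_eeq => z;
  have [-> | ?] := eqVneq z b; [|have [-> | ?] := eqVneq z c];
  neq_to_eqF; eval_words; by [].

Lemma tauVK a b : a != b -> eeq (ecomp (tauV a b) (tau a b)) (@idE X).
Proof. move=> ab; free_identity b b. Qed.

Lemma pcVK u v : u != v -> is_inv adj (pc u v) (pcV u v).
Proof. by move=> uv; split; free_identity v v. Qed.

Lemma respects_adj_tau a b : dom a b -> respects_adj (tau a b).
Proof.
move=> ab; apply: respects_adj_letter_map => q bq.
by rewrite /comm_words /= bq andbT (domP ab bq).
Qed.

Lemma respects_adj_tauV a b : dom a b -> respects_adj (tauV a b).
Proof.
move=> ab; apply: respects_adj_letter_map => q bq.
by rewrite /comm_words /= bq andbT (domP ab bq).
Qed.

Lemma respects_adj_tauC x y c : dom x c -> dom y c -> respects_adj (tauC x y c).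
Proof.
move=> xc yc; apply: respects_adj_letter_map => q cq.
by rewrite /comm_words /= cq !andbT (domP xc cq) (domP yc cq).
Qed.

Lemma eeq_conjT a b x y c tinv : dom a b -> a != b -> dom x c -> dom y c ->
  is_inv adj (tau a b) tinv ->
  eeq (ecomp (tau a b) (ecomp (tauC x y c) tinv)) (conjT a b x y c).
Proof.
move=> ab nab xc yc [tinvR _] z.
apply/(weq_subst (respects_adj_tau ab))/(weq_subst (respects_adj_tauC xc yc)).
rewrite -[tinv z]subst_idE.
apply: weq_trans (subst_eeq _ (fun w => weq_sym (tauVK nab w))) _.
rewrite subst_comp -(subst_gen (tauV a b) z).
exact/(weq_subst (respects_adj_tauV ab))/tinvR.
Qed.

Lemma K_eeq Z (f g : endo X) : eeq f g -> K Z g -> K Z f.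
Proof. by move=> Efg Kg; apply: gen_eeq Kg _ => z; apply/weq_sym/Efg. Qed.

Lemma K_eprod Z fs : foldr (fun f P => K Z f /\ P) True fs -> K Z (eprod fs).
Proof.
elim: fs => [_|f fs IH [Kf Kfs]]; first exact: gen_id.
exact: gen_comp Kf (IH Kfs).
Qed.

Lemma K_tauC (Z : {set X}) x y c : x \in Z -> y \in Z -> c \in Z ->
  dom x c -> dom y c -> x != y -> x != c -> y != c -> K Z (tauC x y c).
Proof.
move=> xZ yZ cZ xc yc nxy nxc nyc; apply/gen_base; left; exists x, y, c.
by rewrite xZ yZ cZ xc yc nxy nxc nyc.
Qed.

Lemma K_pc (Z : {set X}) u v : u \in Z -> v \in Z -> dom u v -> u != v -> K Z (pc u v).
Proof. by move=> uZ vZ uv nuv; apply/gen_base; right; left; exists u, v. Qed.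

Lemma K_pcV (Z : {set X}) u v : u \in Z -> v \in Z -> dom u v -> u != v -> K Z (pcV u v).
Proof. by move=> uZ vZ uv nuv; apply: gen_inv (K_pc uZ vZ uv nuv) (pcVK nuv). Qed.

(* [conjT_c_x] is the configuration (a, b) = (c, x), and so on. *)
Section Configurations.
Variables a b c x y : X.
Hypotheses (nxc : x != c) (nyc : y != c) (nxy : x != y).

Lemma conjT_a_c : a != c ->
  eeq (conjT a c x y c) (eprod [:: pc a c; tauC x y c; pcV a c]).
Proof. move=> nac; free_identity c c. Qed.

Lemma conjT_c_b : c != b -> b != x -> b != y ->
  eeq (conjT c b x y c) (eprod [:: tauC x y c; pc c b; tauC y x b; pcV c b]).
Proof. move=> ncb nbx nby; free_identity b c. Qed.

Lemma conjT_a_b : a != b -> a != c -> b != c -> b != x -> b != y ->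
  eeq (conjT a b x y c) (tauC x y c).
Proof. move=> nab nac nbc nbx nby; free_identity b c. Qed.

Lemma conjT_c_x :
  eeq (conjT c x x y c) (eprod [:: pc c x; pc x c; pcV y x; tauC y c x;
                                   pcV x c; tauC x y c; pc y c; pcV c x]).
Proof. free_identity x c. Qed.

Lemma conjT_y_x : eeq (conjT y x x y c) (tauC x y c).
Proof. free_identity x c. Qed.

Lemma conjT_a_x : a != x -> a != c -> a != y ->
  eeq (conjT a x x y c) (eprod [:: pc x c; tauC a y c; pcV x c; tauC x y c]).
Proof. move=> nax nac nay; free_identity x c. Qed.

Lemma conjT_c_y :
  eeq (conjT c y x y c) (eprod [:: pc c y; pc x y; tauC x y c; pc y c;
                                   tauC c x y; pcV x c; pcV y c; pcV c y]).
Proof. free_identity y c. Qed.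

Lemma conjT_x_y : eeq (conjT x y x y c) (tauC x y c).
Proof. free_identity y c. Qed.

Lemma conjT_a_y : a != y -> a != c -> a != x ->
  eeq (conjT a y x y c) (eprod [:: tauC x y c; pc y c; tauC x a c; pcV y c]).
Proof. move=> nay nac nax; free_identity y c. Qed.

End Configurations.

Ltac K_factor := first [apply: K_tauC | apply: K_pc | apply: K_pcV];
  by rewrite ?inE ?eqxx ?orbT // eq_sym.
Ltac K_factors := apply: K_eprod => /=; repeat split; K_factor.

Lemma K_conjT a b c x y : dom a b -> a != b -> dom x c -> x != c ->
  dom y c -> y != c -> x != y -> K [set a; b; c; x; y] (conjT a b x y c).
Proof.
move=> ab nab xc nxc yc nyc nxy.
have [Ebc | nbc] := eqVneq b c.
  by subst b; apply: K_eeq (conjT_a_c nxc nyc nxy nab) _; K_factors.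
have [Ebx | nbx] := eqVneq b x.
  subst b; have [Eac | nac] := eqVneq a c.
    subst a; have yx : dom y x := dom_trans yc ab.
    by apply: K_eeq (conjT_c_x nxc nyc nxy) _; K_factors.
  have [Eay | nay] := eqVneq a y.
    by subst a; apply: K_eeq (conjT_y_x nxc nyc nxy) _; K_factor.
  have ac : dom a c := dom_trans ab xc.
  by apply: K_eeq (conjT_a_x nxc nyc nxy nab nac nay) _; K_factors.
have [Eby | nby] := eqVneq b y.
  subst b; have [Eac | nac] := eqVneq a c.
    subst a; have xy : dom x y := dom_trans xc ab.
    by apply: K_eeq (conjT_c_y nxc nyc nxy) _; K_factors.
  have [Eax | nax] := eqVneq a x.
    by subst a; apply: K_eeq (conjT_x_y nxc nyc nxy) _; K_factor.
  have ac : dom a c := dom_trans ab yc.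
  by apply: K_eeq (conjT_a_y nxc nyc nxy nab nac nax) _; K_factors.
have [Eac | nac] := eqVneq a c.
  subst a; have xb : dom x b := dom_trans xc ab; have yb : dom y b := dom_trans yc ab.
  by apply: K_eeq (conjT_c_b nxc nyc nxy nab nbx nby) _; K_factors.
by apply: K_eeq (conjT_a_b nxc nyc nxy nab nac nbc nbx nby) _; K_factor.
Qed.

End RAAG.

Theorem mainTheorem4 (X : finType) (adj : rel X)
  (adj_sym : symmetric adj) (adj_irr : irreflexive adj)
  (a b c x y : X) :
  dom adj a b -> a != b -> dom adj x c -> x != c -> dom adj y c -> y != c -> x != y ->
  forall tinv : endo X,
    is_inv adj (transv (a, false) (b, false)) tinv ->
    K adj [set a; b; c; x; y]
      (ecomp (transv (a, false) (b, false))
            (ecomp (ctransv (x, false) (y, false) (c, false)) tinv)).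
Proof.
move=> ab nab xc nxc yc nyc nxy tinv tinvP.
apply: K_eeq (eeq_conjT adj_sym adj_irr ab nab xc yc tinvP) _.
exact: K_conjT.
Qed.
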